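(* Assume $K>1$, $N_r\ge K$, all users share the same parameters $\alpha_k=\alpha$, $c_k=c$, $a_k=a$ ($|a|<1$), data power $P_k=P$ and pilot power $P_{p,k}=P_p$. Let $s=\frac{\sigma_p^2}{\alpha^2P_p\tau_p}$, $\hat e,\check e,z$ as in the definitions below, $\phi=\alpha^2P(\hat ec+\check eca^* )$ and $\beta=K\alpha^2Pz+\sigma_d^2$. Then for every $(P,P_p)$ with $P,P_p>0$ the equation $\frac{\beta}{\phi}=\frac{N_r}{\bar\gamma}-\frac{K-1}{1+\bar\gamma}$ has a unique positive solution $\bar\gamma(P,P_p)$, which is a strictly decreasing function of $\beta/\phi$. Consequently, for $\tau_p,\tau_d\ge1$ and $P_{\mathrm{tot}}>0$, the pairs $(P,P_p)$ maximizing $\bar\gamma(P,P_p)$ subject to $P\tau_d+P_p\tau_p=P_{\mathrm{tot}}$, $P,P_p>0$, are exactly those maximizing $\phi/\beta$ subject to the same constraint.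
   Context: $\hat e=\frac{c(c+s-|a|^2c)}{(c+s)^2-|a|^2c^2}$, $\check e=\frac{acs}{(c+s)^2-|a|^2c^2}$, $z=\frac{cs(c+s-|a|^2c)}{(c+s)^2-|a|^2c^2}$, with $c>0$, $\sigma_p^2,\sigma_d^2>0$. $\tau_p,\tau_d$ are the numbers of pilot and data symbols; $P_{\mathrm{tot}}$ is the per-user total power budget. The equation for $\bar\gamma$ is the average-SINR equation of the MMSE receiver specialized to identical users. *)

From HB Require Import structures.
From mathcomp Require Import all_boot all_order all_algebra.
From mathcomp Require Import complex.
Set Implicit Arguments. Unset Strict Implicit. Unset Printing Implicit Defensive.
Import Order.TTheory GRing.Theory Num.Theory.
Local Open Scope ring_scope.

Section Defs.
Variable R : rcfType.
Local Notation C := R[i].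

Definition toC (x : R) : C := (x%:C)%C.

Definition s_of (alpha Pp sigp2 : R) (taup : nat) : R :=
  sigp2 / (alpha ^+ 2 * Pp * taup%:R).

Definition den (c s : R) (a : C) : C :=
  (toC c + toC s) ^+ 2 - `|a| ^+ 2 * toC c ^+ 2.

Definition ehat (c s : R) (a : C) : C :=
  toC c * (toC c + toC s - `|a| ^+ 2 * toC c) / den c s a.

Definition echeck (c s : R) (a : C) : C :=
  a * toC c * toC s / den c s a.

Definition zz (c s : R) (a : C) : C :=
  toC c * toC s * (toC c + toC s - `|a| ^+ 2 * toC c) / den c s a.

Definition phi (alpha c : R) (a : C) (P s : R) : C :=
  toC (alpha ^+ 2 * P) * (ehat c s a * toC c + echeck c s a * toC c * conjc a).

Definition beta (K : nat) (alpha c : R) (a : C) (P s sigd2 : R) : C :=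
  toC (K%:R * alpha ^+ 2 * P) * zz c s a + toC sigd2.

Definition sinr_eq (K Nr : nat) (alpha c : R) (a : C) (sigp2 sigd2 : R)
  (taup : nat) (P Pp g : R) : Prop :=
  let s := s_of alpha Pp sigp2 taup in
  beta K alpha c a P s sigd2 / phi alpha c a P s =
  toC (Nr%:R / g - (K%:R - 1) / (1 + g)).

End Defs.

From HB Require Import structures.
From mathcomp Require Import all_boot all_order all_algebra.
From mathcomp Require Import complex.
From mathcomp Require Import ring lra.
Set Implicit Arguments. Unset Strict Implicit.
Import Order.TTheory GRing.Theory Num.Theory.
Local Open Scope ring_scope.

(* The quantities beta and phi are complex expressions, but once |a|^2 is
   written as the real number t = |a|^2 (so that a a^* = t as well) all the
   complex factors cancel: phi and beta are embeddings of explicit real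
   numbers phiR and betaR, both positive for c > 0, s >= 0, 0 <= t < 1.
   Hence beta/phi is the embedding of a positive real rhoR, and phi/beta
   that of its inverse.
   The right-hand side f(g) = N/g - k/(1+g) of the SINR equation, with
   0 <= k = K-1 < N = N_r, is a strictly decreasing bijection from
   (0, +oo) onto (0, +oo): its difference quotient has a positive
   numerator, and f(g) = r is a quadratic equation with a positive root.
   The three claims then follow: (i) is bijectivity of f, (ii) is strict
   monotonicity of f, and (iii) holds because g = f^{-1}(rhoR) is a
   decreasing function of rhoR while phi/beta = 1/rhoR is too. *)

Lemma toC_div (R : rcfType) (x y : R) : toC x / toC y = toC (x / y).
Proof. by rewrite /toC fmorph_div. Qed.

Lemma toC_inj (R : rcfType) : injective (@toC R).
Proof. by move=> x y /complexI. Qed.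

Lemma sqr_norm_real (R : rcfType) (a : R[i]) : `|a| < 1 ->
  exists t : R, [/\ 0 <= t, t < 1, `|a| ^+ 2 = toC t & a * conjc a = toC t].
Proof.
move=> a_lt1; set n := Num.sqrt (complex.Re a ^+ 2 + complex.Im a ^+ 2).
have normE : `|a| = toC n by rewrite normc_def.
have n_ge0 : 0 <= n := sqrtr_ge0 _.
have n_lt1 : n < 1 by move: a_lt1; rewrite normE -(rmorph1 (real_complex R)) ltcR.
exists (n ^+ 2); split; first exact: sqr_ge0.
- by rewrite -(expr1n R 2) ltrXn2r.
- by rewrite normE /toC rmorphXn.
- by rewrite -sqr_normc normE /toC rmorphXn.
Qed.

Section RealForms.
Variable R : rcfType.
Implicit Types (alpha c s t P : R) (a : R[i]) (K : nat).

Definition denR c s t : R := (c + s) ^+ 2 - t * c ^+ 2.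

Definition phiR alpha c P s t : R :=
  alpha ^+ 2 * P * c ^+ 2 * (c * (1 - t) + s * (1 + t)) / denR c s t.

Definition betaR K alpha c P s t sigd2 : R :=
  K%:R * alpha ^+ 2 * P * (c * s * (c + s - t * c) / denR c s t) + sigd2.

Definition rhoR K alpha c P s t sigd2 : R :=
  betaR K alpha c P s t sigd2 / phiR alpha c P s t.

Lemma den_real c s a t : `|a| ^+ 2 = toC t -> den c s a = toC (denR c s t).
Proof.
by move=> normE; rewrite /den /denR normE /toC !(rmorphM, rmorphD, rmorphN, rmorphB, rmorphXn).
Qed.

Lemma toC_div_den c s a t x : `|a| ^+ 2 = toC t ->
  toC (x / denR c s t) = toC x / den c s a.
Proof. by move=> normE; rewrite (den_real _ _ normE) toC_div. Qed.

(* phi is real: the cross term a a^* of echeck is t, and the remaining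
   complex factors are embeddings of reals. *)
Lemma phi_real alpha c a P s t :
  `|a| ^+ 2 = toC t -> a * conjc a = toC t -> denR c s t != 0 ->
  phi alpha c a P s = toC (phiR alpha c P s t).
Proof.
move=> normE conjE den_neq0.
have denC_neq0 : den c s a != 0.
  by rewrite (den_real _ _ normE); apply: contra den_neq0 => /eqP/toC_inj ->.
rewrite /phi /ehat /echeck /phiR (toC_div_den _ _ _ normE).
have -> : a * toC c * toC s / den c s a * toC c * conjc a
        = (a * conjc a) * toC c * toC s / den c s a * toC c by ring.
rewrite conjE normE /toC !(rmorphM, rmorphD, rmorphB, rmorphXn, rmorph1).
by field.
Qed.

(* beta is real: z only involves |a|^2 = t. *)
Lemma beta_real K alpha c a P s t (sigd2 : R) : `|a| ^+ 2 = toC t ->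
  beta K alpha c a P s sigd2 = toC (betaR K alpha c P s t sigd2).
Proof.
move=> normE; rewrite /beta /betaR.
have -> : zz c s a = toC (c * s * (c + s - t * c) / denR c s t).
  by rewrite (toC_div_den _ _ _ normE) /zz normE /toC !(rmorphM, rmorphD, rmorphN, rmorphB).
by rewrite /toC !(rmorphM, rmorphD).
Qed.

Section Positivity.
Variables (c s t : R).
Hypotheses (c_gt0 : 0 < c) (s_ge0 : 0 <= s) (t_ge0 : 0 <= t) (t_lt1 : t < 1).

(* (c + s)^2 >= c^2 > t c^2 *)
Lemma denR_gt0 : 0 < denR c s t.
Proof.
have : 0 < (1 - t) * c ^+ 2 by rewrite mulr_gt0 ?subr_gt0 ?exprn_gt0.
have : c ^+ 2 <= (c + s) ^+ 2 by rewrite ler_pXn2r ?nnegrE ?addr_ge0 ?lerDl ?(ltW c_gt0).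
rewrite /denR; lra.
Qed.

Lemma phiR_gt0 alpha P : alpha != 0 -> 0 < P -> 0 < phiR alpha c P s t.
Proof.
move=> alpha_neq0 P_gt0.
have alpha2_gt0 : 0 < alpha ^+ 2 by rewrite lt0r sqr_ge0 andbT sqrf_eq0.
have lin_gt0 : 0 < c * (1 - t) + s * (1 + t).
  by rewrite ltr_pwDl ?mulr_ge0 ?mulr_gt0 ?subr_gt0 ?addr_ge0.
have num_gt0 := mulr_gt0 (mulr_gt0 (mulr_gt0 alpha2_gt0 P_gt0) (exprn_gt0 2 c_gt0)) lin_gt0.
exact: divr_gt0 num_gt0 denR_gt0.
Qed.

Lemma betaR_gt0 K alpha P (sigd2 : R) : 0 < P -> 0 < sigd2 ->
  0 < betaR K alpha c P s t sigd2.
Proof.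
move=> P_gt0 sigd2_gt0.
have gain_ge0 : 0 <= K%:R * alpha ^+ 2 * P.
  exact: mulr_ge0 (mulr_ge0 (ler0n _ _) (sqr_ge0 _)) (ltW P_gt0).
have lin_ge0 : 0 <= c + s - t * c.
  have : 0 <= (1 - t) * c by rewrite mulr_ge0 ?subr_ge0 ?ltW.
  by rewrite mulrBl mul1r addrAC => ?; apply: addr_ge0.
have z_ge0 : 0 <= c * s * (c + s - t * c) / denR c s t.
  exact: divr_ge0 (mulr_ge0 (mulr_ge0 (ltW c_gt0) s_ge0) lin_ge0) (ltW denR_gt0).
by rewrite /betaR ltr_wpDl // mulr_ge0.
Qed.

Lemma rhoR_gt0 K alpha P (sigd2 : R) : alpha != 0 -> 0 < P -> 0 < sigd2 ->
  0 < rhoR K alpha c P s t sigd2.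
Proof. by move=> *; rewrite /rhoR divr_gt0 ?betaR_gt0 ?phiR_gt0. Qed.

Lemma rho_real K alpha a P (sigd2 : R) :
  `|a| ^+ 2 = toC t -> a * conjc a = toC t ->
  beta K alpha c a P s sigd2 / phi alpha c a P s = toC (rhoR K alpha c P s t sigd2).
Proof.
move=> normE conjE.
rewrite (beta_real K alpha c P s sigd2 normE).
by rewrite (phi_real alpha P normE conjE) ?toC_div // gt_eqF ?denR_gt0.
Qed.

End Positivity.
End RealForms.

Lemma s_of_ge0 (R : rcfType) (alpha Pp sigp2 : R) taup :
  0 <= Pp -> 0 <= sigp2 -> 0 <= s_of alpha Pp sigp2 taup.
Proof.
move=> Pp_ge0 sigp2_ge0.
exact: divr_ge0 sigp2_ge0 (mulr_ge0 (mulr_ge0 (sqr_ge0 alpha) Pp_ge0) (ler0n _ _)).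
Qed.

Section SinrRhs.
Variables (R : rcfType) (N k : R).
Hypotheses (k_ge0 : 0 <= k) (k_lt_N : k < N).

Definition sinr_rhs (g : R) : R := N / g - k / (1 + g).

(* f(g1) - f(g2) = (g2 - g1) (N (1 + g1 + g2) + (N - k) g1 g2) / (positive). *)
Lemma sinr_rhs_decr (g1 g2 : R) : 0 < g1 -> g1 < g2 -> sinr_rhs g2 < sinr_rhs g1.
Proof.
move=> g1_gt0 g12; have g2_gt0 : 0 < g2 := lt_trans g1_gt0 g12.
rewrite -subr_gt0.
have N_gt0 : 0 < N := le_lt_trans k_ge0 k_lt_N.
have -> : sinr_rhs g1 - sinr_rhs g2 =
    (g2 - g1) * (N * (1 + g1 + g2) + (N - k) * (g1 * g2))
    / (g1 * g2 * ((1 + g1) * (1 + g2))).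
  by rewrite /sinr_rhs; field; rewrite !gt_eqF // addr_gt0.
have g1_1 : 0 < 1 + g1 by rewrite addr_gt0 ?ltr01.
have g2_1 : 0 < 1 + g2 by rewrite addr_gt0 ?ltr01.
apply: divr_gt0; last by rewrite !mulr_gt0.
rewrite mulr_gt0 ?subr_gt0 // addr_gt0 // mulr_gt0 ?subr_gt0 ?mulr_gt0 //.
by rewrite addr_gt0.
Qed.

Lemma sinr_rhs_le (g1 g2 : R) : 0 < g1 -> 0 < g2 ->
  (sinr_rhs g2 <= sinr_rhs g1) = (g1 <= g2).
Proof.
move=> g1_gt0 g2_gt0; case: (ltgtP g1 g2) => [lt12|lt21|->].
- by rewrite ltW // sinr_rhs_decr.
- by apply/negbTE; rewrite -ltNge sinr_rhs_decr.
- by rewrite !lexx.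
Qed.

Lemma sinr_rhs_inj (g1 g2 : R) : 0 < g1 -> 0 < g2 -> sinr_rhs g1 = sinr_rhs g2 -> g1 = g2.
Proof.
move=> g1_gt0 g2_gt0 E; apply/eqP.
by rewrite eq_le -(sinr_rhs_le g1_gt0 g2_gt0) -(sinr_rhs_le g2_gt0 g1_gt0) E lexx.
Qed.

(* Every positive value is attained: sinr_rhs g = r is the quadratic
   r g^2 + (r - (N - k)) g - N = 0, whose larger root is positive. *)
Lemma sinr_rhs_onto (r : R) : 0 < r -> exists2 g, 0 < g & sinr_rhs g = r.
Proof.
move=> r_gt0; set M := N - k.
have N_gt0 : 0 < N := le_lt_trans k_ge0 k_lt_N.
set D := (M - r) ^+ 2 + 4%:R * r * N.
have rN_gt0 : 0 < 4%:R * r * N by rewrite !mulr_gt0.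
have D_gt0 : 0 < D := ltr_wpDl (sqr_ge0 _) rN_gt0.
set S := Num.sqrt D.
have SS : S ^+ 2 = D := sqr_sqrtr (ltW D_gt0).
have norm_lt_S : `|M - r| < S by rewrite /S -sqrtr_sqr ltr_sqrt // ltrDl.
have num_gt0 : 0 < M - r + S.
  by rewrite addrC -opprB subr_gt0 (le_lt_trans (ler_norm _)) // distrC.
set g := (M - r + S) / (2%:R * r).
have g_gt0 : 0 < g by rewrite divr_gt0 // mulr_gt0.
exists g => //.
have root : r * g ^+ 2 + (r - M) * g - N = 0.
  have -> : r * g ^+ 2 + (r - M) * g - N = (S ^+ 2 - D) / (4%:R * r).
    by rewrite /g /D; field; rewrite gt_eqF.
  by rewrite SS subrr mul0r.
apply/eqP; rewrite -subr_eq0.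
have -> : sinr_rhs g - r = - (r * g ^+ 2 + (r - M) * g - N) / (g * (1 + g)).
  by rewrite /sinr_rhs /M; field; rewrite !gt_eqF // addr_gt0.
by rewrite root oppr0 mul0r.
Qed.

End SinrRhs.

Theorem lemma4 (R : rcfType) (K Nr taup taud : nat) (alpha c sigp2 sigd2 Ptot : R)
  (a : R[i]) :
  (1 < K)%N -> (K <= Nr)%N -> alpha != 0 -> 0 < c -> `|a| < 1 ->
  0 < sigp2 -> 0 < sigd2 ->
  let rho := fun P Pp : R =>
    beta K alpha c a P (s_of alpha Pp sigp2 taup) sigd2 /
    phi alpha c a P (s_of alpha Pp sigp2 taup) in
  let ratio := fun P Pp : R =>
    phi alpha c a P (s_of alpha Pp sigp2 taup) /
    beta K alpha c a P (s_of alpha Pp sigp2 taup) sigd2 in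
  let sol := fun P Pp g : R => 0 < g /\ sinr_eq K Nr alpha c a sigp2 sigd2 taup P Pp g in
  (* (i) existence and uniqueness of the positive solution *)
  (forall P Pp : R, 0 < P -> 0 < Pp -> exists! g : R, sol P Pp g)
  /\
  (* (ii) the solution is a strictly decreasing function of beta/phi *)
  (forall P1 Pp1 P2 Pp2 g1 g2 : R, 0 < P1 -> 0 < Pp1 -> 0 < P2 -> 0 < Pp2 ->
     sol P1 Pp1 g1 -> sol P2 Pp2 g2 -> rho P1 Pp1 < rho P2 Pp2 -> g2 < g1)
  /\
  (* (iii) the constrained maximizers of gammabar are the maximizers of phi/beta *)
  ((0 < taup)%N -> (0 < taud)%N -> 0 < Ptot ->
   forall P Pp : R, 0 < P -> 0 < Pp -> P * taud%:R + Pp * taup%:R = Ptot ->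
   (forall P' Pp' g g' : R, 0 < P' -> 0 < Pp' -> P' * taud%:R + Pp' * taup%:R = Ptot ->
       sol P Pp g -> sol P' Pp' g' -> g' <= g)
   <->
   (forall P' Pp' : R, 0 < P' -> 0 < Pp' -> P' * taud%:R + Pp' * taup%:R = Ptot ->
       ratio P' Pp' <= ratio P Pp)).
Proof.
move=> K_gt1 K_le_Nr alpha_neq0 c_gt0 a_lt1 sigp2_gt0 sigd2_gt0 rho ratio sol.
have [t [t_ge0 t_lt1 normE conjE]] := sqr_norm_real a_lt1.
set k : R := K%:R - 1; set N : R := Nr%:R.
have k_ge0 : 0 <= k by rewrite subr_ge0 ler1n ltnW.
have k_lt_N : k < N.
  have : (K%:R : R) <= N by rewrite ler_nat.
  rewrite /k; lra.
pose r P Pp := rhoR K alpha c P (s_of alpha Pp sigp2 taup) t sigd2.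
have s_ge0 (Pp : R) : 0 < Pp -> 0 <= s_of alpha Pp sigp2 taup.
  by move=> Pp_gt0; rewrite s_of_ge0 ?ltW.
have r_gt0 (P Pp : R) : 0 < P -> 0 < Pp -> 0 < r P Pp.
  by move=> *; rewrite rhoR_gt0 ?s_ge0.
have rhoE (P Pp : R) : 0 < Pp -> rho P Pp = toC (r P Pp).
  by move=> Pp_gt0; rewrite /rho (rho_real c_gt0 (s_ge0 _ Pp_gt0) t_lt1).
have ratioE (P Pp : R) : 0 < Pp -> ratio P Pp = toC (r P Pp)^-1.
  by move=> Pp_gt0; rewrite /ratio -invf_div -/(rho P Pp) rhoE // /toC fmorphV.
have solE (P Pp g : R) : 0 < Pp -> sol P Pp g <-> 0 < g /\ sinr_rhs N k g = r P Pp.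
  move=> Pp_gt0; rewrite /sol /sinr_eq -/(rho P Pp) rhoE //.
  by split=> -[g_gt0 E]; split=> //; [apply: toC_inj; rewrite E | rewrite -E].
split; [|split].
- move=> P Pp P_gt0 Pp_gt0.
  have [g g_gt0 gE] := sinr_rhs_onto k_ge0 k_lt_N (r_gt0 _ _ P_gt0 Pp_gt0).
  exists g; split=> [|g' /solE [//|g'_gt0 g'E]]; first exact/solE.
  by apply: (sinr_rhs_inj k_ge0 k_lt_N) => //; rewrite gE g'E.
- move=> P1 Pp1 P2 Pp2 g1 g2 _ Pp1_gt0 _ Pp2_gt0.
  move=> /solE [//|g1_gt0 E1] /solE [//|g2_gt0 E2].
  rewrite rhoE // rhoE // /toC ltcR -E1 -E2.
  by rewrite ltNge sinr_rhs_le // -ltNge.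
- move=> _ _ _ P Pp P_gt0 Pp_gt0 _.
  have ratio_le (P' Pp' : R) : 0 < P' -> 0 < Pp' ->
      (ratio P' Pp' <= ratio P Pp) = (r P Pp <= r P' Pp').
    by move=> *; rewrite !ratioE // /toC lecR lef_pV2 ?posrE ?r_gt0.
  have [g g_gt0 gE] := sinr_rhs_onto k_ge0 k_lt_N (r_gt0 _ _ P_gt0 Pp_gt0).
  split=> [gmax P' Pp' P'_gt0 Pp'_gt0 budget | rmax P' Pp' g1 g' P'_gt0 Pp'_gt0 budget].
  + have [g' g'_gt0 g'E] := sinr_rhs_onto k_ge0 k_lt_N (r_gt0 _ _ P'_gt0 Pp'_gt0).
    rewrite ratio_le // -gE -g'E sinr_rhs_le //.
    by apply: (gmax P' Pp') => //; apply/solE.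
  + move=> /solE [//|g1_gt0 E] /solE [//|g'_gt0 E'].
    by rewrite -(sinr_rhs_le k_ge0 k_lt_N) // E E' -ratio_le // rmax.
Qed.
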